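(* Let $A$ be the adjacency matrix of an $n$-cell regular network with valency $v$, let $G=\operatorname{Ker}(A-vI)$ be the eigenspace associated with $v$, assume $\dim G>1$, and let $E$ be a direct complement to $F$ in $G$ (so $G=F\oplus E$). Then: (1) for every special Jordan subspace $J\neq F$ to the network contained in $G$, there is a one-dimensional subspace $J'\subseteq E$ which is special in $E$ such that $P(J)=P(J')$ and $F\oplus J=F\oplus J'$; (2) a one-dimensional subspace of $E$ is a special Jordan subspace to the network if and only if it is special in $E$; (3) if $S=F\oplus J_1\oplus\cdots\oplus J_k$ is a direct sum of one-dimensional special Jordan subspaces to the network contained in $G$, then there are one-dimensional subspaces $J_1',\dots,J_k'$ of $E$, each special in $E$, such that $S=F\oplus J_1'\oplus\cdots\oplus J_k'$.
   Context: A regular network is a finite directed graph on cells $1,\dots,n$ (loops and multiple arrows allowed) in which every cell receives the same number $v$ of arrows, called the valency. Its adjacency matrix $A=[a_{ij}]$ has $a_{ij}$ equal to the number of arrows cell $i$ receives from cell $j$; every row sum of $A$ equals $v$. $A$ acts on $\mathbb{C}^n$. (It is known that $v$ is a semisimple eigenvalue of $A$ and $(1,\dots,1)$ is an eigenvector for $v$.) A polydiagonal is a subspace of $\mathbb{C}^n$ of the form $\{x : x_i=x_j \text{ for all } (i,j)\in R\}$ for some (possibly empty) set $R$ of index pairs. $F=\{x_1=\cdots=x_n\}$ is the fully synchrony subspace. $P(W)$ is the smallest polydiagonal containing a subspace $W$. For a subspace $E\subseteq\mathbb{C}^n$, a subspace $W\subseteq E$ is special in $E$ if for every subspace $U\subseteq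 E$ with $\dim U=\dim W$ and $P(U)\subseteq P(W)$ one has $P(U)=P(W)$. For an eigenvalue $\lambda$ of $A$, the generalized eigenspace is $G_\lambda=\operatorname{Ker}(A-\lambda I)^p$ for $p$ large. A Jordan chain of length $k$ for $\lambda$ is a sequence of nonzero vectors $x_1,\dots,x_k$ with $(A-\lambda I)x_1=0$ and $(A-\lambda I)x_i=x_{i-1}$ for $2\le i\le k$; a Jordan subspace is the ($k$-dimensional) span of a Jordan chain. A Jordan subspace $W$ of a generalized eigenspace $G$ is a special Jordan subspace to the network if for every Jordan subspace $U$ of $G$ with $\dim U=\dim W$ and $P(U)\subseteq P(W)$, either $P(U)=P(W)$ or $U=F$. *)

(* Vectors of C^n are row vectors 'rV[R]_n; subspaces are
   represented by (the row space of) square matrices 'M[R]_n (mxalgebra). *)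
From HB Require Import structures.
From mathcomp Require Import all_boot all_order all_algebra.
Set Implicit Arguments. Unset Strict Implicit. Unset Printing Implicit Defensive.
Import Order.TTheory GRing.Theory Num.Theory.
Local Open Scope ring_scope.

Section Network.
Variables (R : fieldType) (n : nat).

Definition pair_col (p : 'I_n * 'I_n) : 'M[R]_(n, 1) :=
  \col_k (((k == p.1)%:R : R) - (k == p.2)%:R).

(* the polydiagonal {x : x_i = x_j for all (i,j) in S} *)
Definition polyd (S : {set 'I_n * 'I_n}) : 'M[R]_n :=
  (\bigcap_(p in S) kermx (pair_col p))%MS.

Definition is_polydiagonal (W : 'M[R]_n) : Prop :=
  exists S : {set 'I_n * 'I_n}, (W == polyd S)%MS.

Definition Ppoly (W : 'M[R]_n) : 'M[R]_n :=
  (\bigcap_(S : {set 'I_n * 'I_n} | (W <= polyd S)%MS) polyd S)%MS.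

Definition Fsync : 'M[R]_n := polyd setT.

Definition special_in (E W : 'M[R]_n) : Prop :=
  (W <= E)%MS /\
  forall U : 'M[R]_n, (U <= E)%MS -> \rank U = \rank W ->
    (Ppoly U <= Ppoly W)%MS -> (Ppoly U == Ppoly W)%MS.

(* A acting on column vectors x |-> A x corresponds, for row vectors, to
   x |-> x *m A^T. *)
Definition actmx (A : 'M[R]_n) : 'M[R]_n := A^T.

(* generalized eigenspace G_lambda = Ker (A - lambda I)^n  (n is large enough) *)
Definition gen_eigenspace (A : 'M[R]_n) (lam : R) : 'M[R]_n :=
  kermx ((actmx A - lam%:M) ^+ n).

(* Jordan chain x_1, ..., x_k (indices 0..k-1 here) for lambda *)
Definition jordan_chain (A : 'M[R]_n) (lam : R) (k : nat)
    (x : 'I_k -> 'rV[R]_n) : Prop :=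
  (forall i, x i != 0) /\
  (forall i : 'I_k, val i = 0%N -> x i *m (actmx A - lam%:M) = 0) /\
  (forall (i j : 'I_k), val i = (val j).+1 -> x i *m (actmx A - lam%:M) = x j).

Definition jordan_subspace (A : 'M[R]_n) (lam : R) (W : 'M[R]_n) : Prop :=
  (W <= gen_eigenspace A lam)%MS /\
  exists (k : nat) (x : 'I_k -> 'rV[R]_n),
    (0 < k)%N /\ jordan_chain A lam x /\ (W == \sum_(i < k) <<x i>>)%MS.

Definition special_jordan (A : 'M[R]_n) (lam : R) (W : 'M[R]_n) : Prop :=
  jordan_subspace A lam W /\
  forall U : 'M[R]_n, jordan_subspace A lam U -> \rank U = \rank W ->
    (Ppoly U <= Ppoly W)%MS -> (Ppoly U == Ppoly W)%MS \/ (U == Fsync)%MS.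

End Network.

Definition adjR (R : fieldType) (n : nat) (A : 'M[nat]_n) : 'M[R]_n :=
  map_mx (fun k : nat => (k%:R : R)) A.

Definition regular_network (n : nat) (A : 'M[nat]_n) (v : nat) : Prop :=
  forall i : 'I_n, (\sum_(j < n) A i j)%N = v.

From HB Require Import structures.
From mathcomp Require Import all_boot all_order all_algebra.
Set Implicit Arguments. Unset Strict Implicit. Unset Printing Implicit Defensive.
Import Order.TTheory GRing.Theory Num.Theory.
Local Open Scope ring_scope.

(* Let G = Ker (A - v I) = F (+) E and let P be the projection of
   G onto E along F.  Three observations carry the whole theorem:
   - every polydiagonal contains F, so subspaces that agree modulo F lie in
     the same polydiagonals: P(W) = P(W P) and F + W = F + W P for W <= G;
   - since dim F <= 1, a line of G either equals F or meets it trivially, and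
     for such lines W the projection W P is again a line;
   - the Jordan subspaces contained in the eigenspace Ker (A - lam I) are
     exactly its lines (a chain of length >= 2 leaves the kernel).
   Hence J |-> J P is a correspondence between special Jordan lines of G
   different from F and lines of E special in E, preserving P(.) and F + (.). *)

Section PolydiagonalsModF.
Variables (R : fieldType) (n : nat).
Implicit Types (W U X Y : 'M[R]_n).

Lemma polyd_subP m (W : 'M[R]_(m, n)) S :
  (W <= polyd R S)%MS <-> forall p, p \in S -> W *m pair_col R p = 0.
Proof.
split; first by move=> /sub_bigcapmxP hW p /hW /sub_kermxP.
by move=> hW; apply/sub_bigcapmxP => p /hW /sub_kermxP.
Qed.

Lemma Fsync_sub_polyd S : (Fsync R n <= polyd R S)%MS.
Proof. by apply/sub_bigcapmxP => p _; apply: (bigcapmx_inf p); rewrite ?in_setT. Qed.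

Lemma Fsync_pair_col m (W : 'M[R]_(m, n)) p :
  (W <= Fsync R n)%MS -> W *m pair_col R p = 0.
Proof. by move=> /polyd_subP; apply; rewrite in_setT. Qed.

Lemma sub_polyd_modF X Y S : (X - Y <= Fsync R n)%MS ->
  (X <= polyd R S)%MS -> (Y <= polyd R S)%MS.
Proof.
move=> sXY_F sX; have -> : Y = X - (X - Y) by rewrite opprB addrCA subrr addr0.
rewrite addmx_sub // eqmx_opp.
exact: submx_trans sXY_F (Fsync_sub_polyd S).
Qed.

Lemma Ppoly_modF X Y : (X - Y <= Fsync R n)%MS -> Ppoly X = Ppoly Y.
Proof.
move=> sXY_F; apply: eq_bigl => S; apply/idP/idP; first exact: sub_polyd_modF.
by apply: sub_polyd_modF; rewrite -opprB eqmx_opp.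
Qed.

Lemma addsF_modF X Y : (X - Y <= Fsync R n)%MS ->
  (Fsync R n + X == Fsync R n + Y)%MS.
Proof.
move=> sXY_F; apply/andP; split; rewrite addsmx_sub addsmxSl /=.
  by rewrite -[X](addrNK Y) addmx_sub_adds.
have -> : Y = - (X - Y) + X by rewrite opprB subrK.
by rewrite addmx_sub_adds // eqmx_opp.
Qed.

Lemma pair_col_eval (r : 'rV[R]_n) (a b : 'I_n) :
  (r *m pair_col R (a, b)) 0 0 = r 0 a - r 0 b.
Proof.
have pick_coord c : \sum_k r 0 k * ((k == c)%:R : R) = r 0 c.
  rewrite (bigD1 c) //= eqxx mulr1 big1 ?addr0 // => k /negbTE ->.
  by rewrite mulr0.
rewrite mxE; under eq_bigr => k _ do rewrite mxE /= mulrBr.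
by rewrite sumrB !pick_coord.
Qed.

(* F is spanned by the all-ones vector, so it has dimension at most one. *)
Lemma rank_Fsync : (\rank (Fsync R n) <= 1)%N.
Proof.
suff /mxrankS : (Fsync R n <= (const_mx 1 : 'rV[R]_n))%MS.
  by move/leq_trans; apply; apply: rank_leq_row.
apply/row_subP => i; move: (row i _) (row_sub i (Fsync R n)) => r sr_F.
have r_const a b : r 0 a = r 0 b.
  by apply/eqP; rewrite -subr_eq0 -pair_col_eval Fsync_pair_col ?mxE.
case: (pickP (fun _ : 'I_n => true)) => [i0 _ | no_index].
  suff -> : r = r 0 i0 *: const_mx 1 by rewrite scalemx_sub.
  by apply/matrixP => a b; rewrite !mxE mulr1 (ord1 a) (r_const b i0).
suff -> : r = 0 by rewrite sub0mx.
by apply/matrixP => a b; have := no_index b.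
Qed.

Lemma line_sub_or_disjoint U (V : 'M[R]_n) :
  \rank U = 1%N -> (U <= V)%MS \/ (U :&: V = 0)%MS.
Proof.
move=> rU; have := mxrankS (capmxSl U V); rewrite rU.
case rUV: (\rank (U :&: V)) => [|[|//]] _.
  by right; apply/eqP; rewrite -mxrank_eq0 rUV.
left; have [_ /= eqUV] := mxrank_leqif_sup (capmxSl U V).
have : (U <= U :&: V)%MS by rewrite -eqUV rU rUV.
by move/submx_trans; apply; apply: capmxSr.
Qed.

(* Since dim F <= 1, a line inside F is F itself. *)
Lemma line_sub_Fsync U : \rank U = 1%N -> (U <= Fsync R n)%MS -> (U == Fsync R n)%MS.
Proof.
move=> rU sU_F; rewrite -(mxrank_leqif_eq sU_F).2 rU eqn_leq rank_Fsync andbT.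
by rewrite -rU mxrankS.
Qed.

End PolydiagonalsModF.

Section JordanLines.
Variables (R : fieldType) (n : nat) (A : 'M[R]_n) (lam : R).
Implicit Types (U : 'M[R]_n).
Let M := actmx A - lam%:M.

Lemma jordan_line_sub_eigenspace U :
  jordan_subspace A lam U -> \rank U = 1%N -> (U <= kermx M)%MS.
Proof.
move=> [_ [k [x [k_gt0 [[x_nz [x0_eigen _]] /eqmxP defU]]]]] rU.
set i0 := Ordinal k_gt0.
have x0_sub : (x i0 <= U)%MS by rewrite defU (sumsmx_sup i0) // genmxE.
have : (x i0 == U)%MS by rewrite -(mxrank_leqif_eq x0_sub).2 rU rank_rV x_nz.
by move/eqmxP => <-; apply/sub_kermxP; apply: x0_eigen.
Qed.

(* A Jordan subspace inside the eigenspace is a line: a chain of length >= 2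
   would have its second vector mapped to the nonzero first one. *)
Lemma jordan_sub_eigenspace_line U :
  jordan_subspace A lam U -> (U <= kermx M)%MS -> \rank U = 1%N.
Proof.
move=> [_ [k [x [k_gt0 [[x_nz [_ x_succ]] /eqmxP defU]]]]] sU_ker.
have k1 : k = 1%N.
  case: k x k_gt0 x_nz x_succ defU => [|[|k]] x // _ x_nz x_succ defU.
  pose i0 := Ordinal (isT : (0 < k.+2)%N); pose i1 := Ordinal (isT : (1 < k.+2)%N).
  have : (x i1 <= kermx M)%MS.
    by apply: submx_trans sU_ker; rewrite defU (sumsmx_sup i1) // genmxE.
  move/sub_kermxP; rewrite (x_succ i1 i0 erefl) => x0_eq0.
  by move: (x_nz i0); rewrite x0_eq0 eqxx.
by subst k; rewrite defU big_ord1 genmxE rank_rV x_nz.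
Qed.

Lemma eigenline_jordan U : (0 < n)%N ->
  (U <= kermx M)%MS -> \rank U = 1%N -> jordan_subspace A lam U.
Proof.
move=> n_gt0 sU_ker rU; have nzU : nz_row U != 0 by rewrite nz_row_eq0 -mxrank_eq0 rU.
split.
  apply: submx_trans sU_ker _; apply/sub_kermxP.
  have -> : (actmx A - lam%:M) ^+ n = M *m M ^+ n.-1 by rewrite mulmxE -exprS prednK.
  rewrite mulmxA.
  by have /sub_kermxP -> := submx_refl (kermx M); rewrite mul0mx.
exists 1%N, (fun _ => nz_row U); split => //; split.
  split=> [_ | ]; first exact: nzU.
  split=> [_ _ | i j]; last by rewrite (ord1 i).
  by apply/sub_kermxP; apply: submx_trans (nz_row_sub U) sU_ker.
rewrite big_ord1; apply/eqmxP/eqmx_sym; apply: eqmx_trans (genmxE _) _; apply/eqmxP.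
by rewrite -(mxrank_leqif_eq (nz_row_sub U)).2 rU rank_rV nzU.
Qed.

End JordanLines.

Lemma adds_sum_sub (R : fieldType) (n k : nat) (F : 'M[R]_n) (X Y : 'I_k -> 'M[R]_n) :
  (forall i, (X i <= F + Y i)%MS) -> (F + \sum_(i < k) X i <= F + \sum_(i < k) Y i)%MS.
Proof.
move=> sXY; rewrite addsmx_sub addsmxSl /=; apply/sumsmx_subP => i _.
by apply: submx_trans (sXY i) _; rewrite addsmxS // (sumsmx_sup i).
Qed.

Section ProjectionOntoComplement.
Variables (R : fieldType) (n : nat) (A : 'M[R]_n) (lam : R) (E : 'M[R]_n).
Implicit Types (W U J : 'M[R]_n).
Local Notation F := (Fsync R n).
Local Notation G := (kermx (actmx A - lam%:M)).
Hypothesis n_gt0 : (0 < n)%N.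
Hypothesis defG : (F + E :=: G)%MS.
Hypothesis dirFE : mxdirect (F + E).

Let P := proj_mx E F.

Let capEF : (E :&: F = 0)%MS.
Proof. by rewrite capmxC; apply/mxdirect_addsP. Qed.

Let E_sub_G : (E <= G)%MS.
Proof. by rewrite -defG addsmxSr. Qed.

Let sub_E_F_eq0 U : (U <= E)%MS -> (U <= F)%MS -> U = 0.
Proof. by move=> sUE sUF; apply/eqP; rewrite -submx0 -capEF sub_capmx sUE. Qed.

Lemma proj_modF W : (W <= G)%MS -> (W - W *m P <= F)%MS.
Proof. by move=> sWG; apply: proj_mx_compl_sub; rewrite addsmxC defG. Qed.

Lemma Ppoly_proj W : (W <= G)%MS -> Ppoly W = Ppoly (W *m P).
Proof. by move=> sWG; apply/Ppoly_modF/proj_modF. Qed.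

Lemma addsF_proj W : (W <= G)%MS -> (F + W == F + W *m P)%MS.
Proof. by move=> sWG; apply/addsF_modF/proj_modF. Qed.

Lemma rank_proj W : (W <= G)%MS -> (W :&: F = 0)%MS -> \rank (W *m P) = \rank W.
Proof.
move=> sWG capWF; apply/eqP; rewrite eqn_leq mxrankM_maxl /=.
have rankFW : \rank (F + W) = (\rank F + \rank W)%N.
  by apply/eqP; rewrite (mxrank_adds_leqif F W).2 capmxC capWF submx_refl.
have := (mxrank_adds_leqif F (W *m P)).1.
by rewrite -(eqmx_rank (addsF_proj sWG)) rankFW leq_add2l.
Qed.

Lemma line_capF W : \rank W = 1%N -> ~ (W == F)%MS -> (W :&: F = 0)%MS.
Proof. by move=> rW W_neqF; case: (line_sub_or_disjoint F rW) => // /(line_sub_Fsync rW). Qed.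

Let line_E_jordan U : (U <= E)%MS -> \rank U = 1%N -> jordan_subspace A lam U.
Proof. by move=> sUE rU; apply: eigenline_jordan => //; apply: submx_trans E_sub_G. Qed.

Let line_E_not_F U : (U <= E)%MS -> \rank U = 1%N -> ~ (U == F)%MS.
Proof. by move=> sUE rU /andP[sUF _]; move: rU; rewrite (sub_E_F_eq0 sUE sUF) mxrank0. Qed.

Lemma special_jordan_proj J : special_jordan A lam J -> (J <= G)%MS ->
  (J :&: F = 0)%MS -> special_in E (J *m P).
Proof.
move=> [jJ specJ] sJG capJF; split=> [|U sUE rankU]; first exact: proj_mx_sub.
have rJ : \rank J = 1%N by apply: jordan_sub_eigenspace_line jJ sJG.
have rU : \rank U = 1%N by rewrite rankU rank_proj.
rewrite -Ppoly_proj // => sPU.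
have [//|U_eqF] := specJ U (line_E_jordan sUE rU) (etrans rU (esym rJ)) sPU.
by case: (line_E_not_F sUE rU).
Qed.

Lemma special_jordan_line_E W : (W <= E)%MS -> \rank W = 1%N ->
  special_jordan A lam W <-> special_in E W.
Proof.
move=> sWE rW; split=> [[_ specW] | [_ specW]].
  split=> // U sUE rankU sPU.
  have [//|U_eqF] := specW U (line_E_jordan sUE (etrans rankU rW)) rankU sPU.
  by case: (line_E_not_F sUE (etrans rankU rW)).
split=> [|U jU rankU sPU]; first exact: line_E_jordan.
have rU : \rank U = 1%N by rewrite rankU.
have sUG : (U <= G)%MS by apply: jordan_line_sub_eigenspace jU rU.
have [sUF | capUF] := line_sub_or_disjoint F rU; first by right; apply: line_sub_Fsync.
left; rewrite Ppoly_proj // in sPU *.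
by apply: specW sPU; rewrite ?proj_mx_sub ?rank_proj.
Qed.

Lemma special_jordan_to_E J : special_jordan A lam J -> (J <= G)%MS -> ~ (J == F)%MS ->
  exists J' : 'M[R]_n,
    [/\ (J' <= E)%MS, \rank J' = 1%N, special_in E J',
        (Ppoly J == Ppoly J')%MS &
        [/\ mxdirect (F + J), mxdirect (F + J') & (F + J == F + J')%MS]].
Proof.
move=> specJ sJG J_neqF.
have rJ : \rank J = 1%N by apply: jordan_sub_eigenspace_line specJ.1 sJG.
have capJF := line_capF rJ J_neqF.
exists (J *m P); split; rewrite ?proj_mx_sub ?rank_proj //.
- exact: special_jordan_proj.
- by rewrite -Ppoly_proj //; apply/eqmxP.
split; last exact: addsF_proj.
  by apply/mxdirect_addsP; rewrite capmxC.
apply/mxdirect_addsP/eqP; rewrite -submx0 -capEF capmxC.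
by rewrite capmxS // proj_mx_sub.
Qed.

Lemma special_jordan_sum_to_E k (Js : 'I_k -> 'M[R]_n) :
  (forall i, [/\ special_jordan A lam (Js i), \rank (Js i) = 1%N & (Js i <= G)%MS]) ->
  mxdirect (F + \sum_(i < k) Js i) ->
  exists Js' : 'I_k -> 'M[R]_n,
    [/\ forall i, [/\ (Js' i <= E)%MS, \rank (Js' i) = 1%N & special_in E (Js' i)],
        mxdirect (F + \sum_(i < k) Js' i) &
        (F + \sum_(i < k) Js i == F + \sum_(i < k) Js' i)%MS].
Proof.
move=> hJs dir_sum.
have capJF i : (Js i :&: F = 0)%MS.
  move: dir_sum; rewrite mxdirect_addsE => /and3P[_ _ /eqP cap_sum].
  by apply/eqP; rewrite -submx0 -cap_sum capmxC capmxS // (sumsmx_sup i).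
have rJP i : \rank (Js i *m P) = \rank (Js i).
  by case: (hJs i) => _ _ sJG; rewrite rank_proj.
have eq_sums : (F + \sum_(i < k) Js i == F + \sum_(i < k) Js i *m P)%MS.
  apply/andP; split; apply: adds_sum_sub => i; case: (hJs i) => _ _ sJG;
    have /andP[sJ sJP] := addsF_proj sJG.
    exact: submx_trans (addsmxSr F _) sJ.
  exact: submx_trans (addsmxSr F _) sJP.
exists (fun i => Js i *m P); split=> //.
  move=> i; case: (hJs i) => specJ rJ sJG.
  by rewrite proj_mx_sub rJP rJ; split=> //; apply: special_jordan_proj.
move: dir_sum; rewrite !mxdirectE /= -(eqmx_rank eq_sums).
suff -> : (\sum_(i < k) \rank (Js i *m P) = \sum_(i < k) \rank (Js i))%N by [].
by apply: eq_bigr => i _; rewrite rJP.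
Qed.

End ProjectionOntoComplement.

Theorem mainTheorem4 (R : numClosedFieldType) (n : nat) (A : 'M[nat]_n) (v : nat)
  (hreg : regular_network A v)
  (E : 'M[R]_n)
  (hdimG : (1 < \rank (kermx (actmx (adjR R A) - (v%:R : R)%:M)))%N)
  (hE : (Fsync R n + E :=: kermx (actmx (adjR R A) - (v%:R : R)%:M))%MS)
  (hFE : mxdirect (Fsync R n + E)) :
  let G := kermx (actmx (adjR R A) - (v%:R : R)%:M) in
  let F := Fsync R n in
  let Ar := adjR R A in
  (* (1) *)
  (forall J : 'M[R]_n, special_jordan Ar (v%:R) J -> (J <= G)%MS -> ~ (J == F)%MS ->
     exists J' : 'M[R]_n,
       [/\ (J' <= E)%MS, \rank J' = 1%N, special_in E J',
           (Ppoly J == Ppoly J')%MS &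
           [/\ mxdirect (F + J), mxdirect (F + J') & (F + J == F + J')%MS]])
  /\
  (* (2) *)
  (forall W : 'M[R]_n, (W <= E)%MS -> \rank W = 1%N ->
     (special_jordan Ar (v%:R) W <-> special_in E W))
  /\
  (* (3) *)
  (forall (k : nat) (Js : 'I_k -> 'M[R]_n),
     (forall i, [/\ special_jordan Ar (v%:R) (Js i), \rank (Js i) = 1%N &
                   (Js i <= G)%MS]) ->
     mxdirect (F + \sum_(i < k) Js i) ->
     exists Js' : 'I_k -> 'M[R]_n,
       [/\ forall i, [/\ (Js' i <= E)%MS, \rank (Js' i) = 1%N & special_in E (Js' i)],
           mxdirect (F + \sum_(i < k) Js' i) &
           (F + \sum_(i < k) Js i == F + \sum_(i < k) Js' i)%MS]).
Proof.
move=> G F Ar.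
(* dim G > 1 forces n > 0, so eigenlines are Jordan subspaces. *)
have n_gt0 : (0 < n)%N by apply: leq_trans (ltnW hdimG) (rank_leq_row _).
split; first exact: special_jordan_to_E n_gt0 hE hFE.
split; first exact: special_jordan_line_E n_gt0 hE hFE.
exact: special_jordan_sum_to_E n_gt0 hE hFE.
Qed.
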